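(* Let $\mathcal{X}\subseteq\mathbb{R}^d$ and let $\mathcal{M}$ be a randomized mechanism on weighted data sets that admits a weighted distinguishability profile $\epsilon\colon[1,\infty)\times\mathcal{X}\to\mathbb{R}_{\ge 0}$. Let $q\colon\mathcal{X}\to(0,1]$ be a function and let $S_q$ be the Poisson importance sampler for $q$. Then the mechanism $\widehat{\mathcal{M}}=\mathcal{M}\circ S_q$ (acting on unweighted data sets) admits the distinguishability profile $$\psi(\mathbf{x})=\log\Big(1+q(\mathbf{x})\big(e^{\epsilon(w,\mathbf{x})}-1\big)\Big),\qquad\text{where } w=1/q(\mathbf{x}).$$
   Context: A data set is a finite subset $\mathcal{D}$ of $\mathcal{X}$. Two distributions $P,Q$ on a space $\mathcal{Y}$ are $\epsilon$-indistinguishable ($\epsilon\ge 0$) if $P(Y)\le e^{\epsilon}Q(Y)$ and $Q(Y)\le e^{\epsilon}P(Y)$ for all measurable $Y\subseteq\mathcal{Y}$. A function $\psi\colon\mathcal{X}\to\mathbb{R}_{\ge0}$ is a distinguishability profile of a mechanism $\mathcal{A}$ on data sets if for all data sets $\mathcal{D}\subseteq\mathcal{X}$ and all points $\mathbf{x}\in\mathcal{X}$, the distributions of $\mathcal{A}(\mathcal{D})$ and $\mathcal{A}(\mathcal{D}\cup\{\mathbf{x}\})$ are $\psi(\mathbf{x})$-indistinguishable. A weighted data set is a finite set $\mathcal{S}=\{(w_i,\mathbf{x}_i)\}_{i=1}^n$ with $w_i\ge1$, $\mathbf{x}_i\in\mathcal{X}$. A function $\epsilon\colon[1,\infty)\times\mathcal{X}\to\mathbb{R}_{\ge0}$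 is a weighted distinguishability profile of a mechanism $\mathcal{M}$ on weighted data sets if for all weighted data sets $\mathcal{S}$ and all $(w',\mathbf{x}')$, the distributions of $\mathcal{M}(\mathcal{S})$ and $\mathcal{M}(\mathcal{S}\cup\{(w',\mathbf{x}')\})$ are $\epsilon(w',\mathbf{x}')$-indistinguishable. The Poisson importance sampler for $q$ is the randomized map $S_q(\mathcal{D})=\{(w_i,\mathbf{x}_i)\mid \gamma_i=1\}$ for $\mathcal{D}=\{\mathbf{x}_1,\dots,\mathbf{x}_n\}$, where $w_i=1/q(\mathbf{x}_i)$ and $\gamma_1,\dots,\gamma_n$ are independent Bernoulli variables with parameters $q(\mathbf{x}_i)$. *)

From HB Require Import structures.
From mathcomp Require Import all_boot all_order all_algebra.
From mathcomp Require Import finmap.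
From mathcomp Require Import all_classical all_reals all_analysis.
Set Implicit Arguments. Unset Strict Implicit. Unset Printing Implicit Defensive.
Import Order.TTheory GRing.Theory Num.Theory.
Local Open Scope classical_set_scope.
Local Open Scope ring_scope.
Local Open Scope fset_scope.

Notation point R n := ('rV[R]_n).

Definition dataset_in (R : realType) (n : nat) (X : set (point R n))
  (D : {fset point R n}) : Prop := forall x, x \in D -> X x.

Definition wdataset_in (R : realType) (n : nat) (X : set (point R n))
  (S : {fset (R * point R n)}) : Prop :=
  forall p, p \in S -> 1 <= p.1 /\ X p.2.

Definition indist (R : realType) (dY : measure_display) (Y : measurableType dY)
  (eps : R) (P Q : set Y -> \bar R) : Prop :=
  forall A : set Y, measurable A ->
    (P A <= (expR eps)%:E * Q A)%E /\ (Q A <= (expR eps)%:E * P A)%E.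

Definition weighted_profile (R : realType) (n : nat) (X : set (point R n))
  (dY : measure_display) (Y : measurableType dY)
  (M : {fset (R * point R n)} -> probability Y R)
  (eps : R -> point R n -> R) : Prop :=
  (forall w x, 1 <= w -> X x -> 0 <= eps w x) /\
  forall S w' x', wdataset_in X S -> 1 <= w' -> X x' ->
    indist (eps w' x') (M S) (M (S `|` [fset (w', x')])).

(* Distinguishability profile of a mechanism on (unweighted) data sets,
   given through the law of its output (a set function on Y). *)
Definition profile (R : realType) (n : nat) (X : set (point R n))
  (dY : measure_display) (Y : measurableType dY)
  (A : {fset point R n} -> set Y -> \bar R)
  (psi : point R n -> R) : Prop :=
  (forall x, X x -> 0 <= psi x) /\
  forall D x, dataset_in X D -> X x ->
    indist (psi x) (A D) (A (D `|` [fset x])).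

(* Output of the Poisson importance sampler S_q on D when exactly the points of
   T (a subset of D) are selected: {(1/q x, x) | x in T}. *)
Definition weighted_of (R : realType) (n : nat) (q : point R n -> R)
  (D : {fset point R n}) (T : {set D}) : {fset (R * point R n)} :=
  [fset ((q (val x))^-1, val x) | x in T].

(* Probability that the Poisson importance sampler selects exactly T:
   independent Bernoulli(q x) indicators for x in D. *)
Definition sel_prob (R : realType) (n : nat) (q : point R n -> R)
  (D : {fset point R n}) (T : {set D}) : R :=
  (\prod_(x in T) q (val x)) * (\prod_(x in ~: T) (1 - q (val x))).

(* Law of the composed mechanism  M o S_q  on data set D:
   P(M(S_q(D)) in A) = sum_T P(S_q(D) = T-weighted) * P(M(T-weighted) in A). *)
Definition composed_law (R : realType) (n : nat)
  (dY : measure_display) (Y : measurableType dY)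
  (M : {fset (R * point R n)} -> probability Y R)
  (q : point R n -> R) (D : {fset point R n}) (A : set Y) : \bar R :=
  (\sum_(T : {set D}) (sel_prob q T)%:E * M (weighted_of q T) A)%E.

From HB Require Import structures.
From mathcomp Require Import all_boot all_order all_algebra.
From mathcomp Require Import finmap.
From mathcomp Require Import all_classical all_reals all_analysis.
From mathcomp Require Import lra.
Set Implicit Arguments. Unset Strict Implicit. Unset Printing Implicit Defensive.
Import Order.TTheory GRing.Theory Num.Theory.
Local Open Scope classical_set_scope.
Local Open Scope ring_scope.

(* Put x outside D (if x is already in D, both data sets coincide).  A
   selection of D ∪ {x} is a selection T of D together with the decision on x,
   rejected with probability 1 - q x or accepted with probability q x, in which
   case the weighted point (1/q x, x) is added.  So, selection by selection, the
   law of M ∘ S_q on D ∪ {x} is the mixture (1 - q) P_T + q P'_T, against P_T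
   on D, where P_T and P'_T are eps-indistinguishable by the weighted profile.
   Such a mixture is within the factor 1 + q (e^eps - 1) of P_T in both
   directions, and summing over T with the selection probabilities keeps both
   bounds. *)

Section SubsetsFsetU1.
Local Open Scope fset_scope.
Variables (K : choiceType) (D : {fset K}) (x : K).
Hypothesis xD : x \notin D.

Local Notation D1 := (D `|` [fset x]).

Definition added_elt : D1 := [` fsetU1r D x].
Definition embed : D -> D1 := fincl (fsubsetUl D [fset x]).
Definition embed_set (T : {set D}) : {set D1} := embed @: T.
Definition embed_set_add (T : {set D}) : {set D1} := added_elt |: embed_set T.

Lemma embed_inj : injective embed. Proof. exact: fincl_inj. Qed.

Lemma embed_neq_added z : embed z != added_elt.
Proof. by apply/eqP => /(congr1 val) /= zx; move: xD; rewrite -zx (valP z). Qed.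

Lemma added_or_embed (y : D1) : y = added_elt \/ exists z, y = embed z.
Proof.
have /fsetUP [yD | /fset1P yx] := valP y; last by left; apply: val_inj.
by right; exists [` yD]; apply: val_inj.
Qed.

Lemma mem_embed_set T z : (embed z \in embed_set T) = (z \in T).
Proof. exact/mem_imset/embed_inj. Qed.

Lemma added_notin_embed_set T : added_elt \notin embed_set T.
Proof.
by apply/imsetP => -[z _ /eqP]; rewrite eq_sym (negbTE (embed_neq_added z)).
Qed.

Lemma embed_setK : cancel embed_set (preimset embed \o mem).
Proof. by move=> T; apply/setP => z; rewrite inE mem_embed_set. Qed.

Lemma embed_set_addK : cancel embed_set_add (preimset embed \o mem).
Proof.
move=> T; apply/setP => z.
by rewrite inE in_setU1 (negbTE (embed_neq_added z)) mem_embed_set.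
Qed.

Lemma embed_set_preimK (T : {set D1}) :
  added_elt \notin T -> embed_set (embed @^-1: T) = T.
Proof.
move=> xT; apply/setP => y; have [-> | [z ->]] := added_or_embed y.
  by rewrite (negbTE xT) (negbTE (added_notin_embed_set _)).
by rewrite mem_embed_set inE.
Qed.

Lemma embed_set_add_preimK (T : {set D1}) :
  added_elt \in T -> embed_set_add (embed @^-1: T) = T.
Proof.
move=> xT; apply/setP => y; have [-> | [z ->]] := added_or_embed y.
  by rewrite xT setU11.
by rewrite in_setU1 (negbTE (embed_neq_added z)) mem_embed_set inE.
Qed.

Lemma setC_embed_set T : ~: embed_set T = embed_set_add (~: T).
Proof.
apply/setP => y; have [-> | [z ->]] := added_or_embed y.
  by rewrite finset.in_setC setU11 added_notin_embed_set.
rewrite finset.in_setC in_setU1 (negbTE (embed_neq_added z)).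
by rewrite !mem_embed_set finset.in_setC.
Qed.

Lemma setC_embed_set_add T : ~: embed_set_add T = embed_set (~: T).
Proof. by rewrite -[in LHS](finset.setCK T) -setC_embed_set finset.setCK. Qed.

Lemma big_subsets_fsetU1 (V : Type) (idx : V) (op : Monoid.com_law idx)
    (F : {set D1} -> V) :
  \big[op/idx]_(T : {set D1}) F T =
  \big[op/idx]_(T : {set D}) op (F (embed_set T)) (F (embed_set_add T)).
Proof.
rewrite big_split [LHS](bigID (fun T : {set D1} => added_elt \in T)) /=.
rewrite Monoid.mulmC.
congr (op _ _).
  rewrite (reindex_onto embed_set (preimset embed \o mem) embed_set_preimK).
  by apply: eq_bigl => T; rewrite added_notin_embed_set embed_setK eqxx.
rewrite (reindex_onto embed_set_add (preimset embed \o mem)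
                      embed_set_add_preimK).
by apply: eq_bigl => T; rewrite setU11 embed_set_addK eqxx.
Qed.

End SubsetsFsetU1.

Section PoissonSampler.
Local Open Scope fset_scope.
Variables (R : realType) (n : nat) (q : 'rV[R]_n -> R).

Lemma sel_prob_ge0 (D : {fset 'rV[R]_n}) (T : {set D}) :
  (forall y, y \in D -> 0 <= q y <= 1) -> 0 <= sel_prob q T.
Proof.
move=> q01; apply: mulr_ge0; apply: prodr_ge0 => y _;
  by have /andP[q0 q1] := q01 _ (valP y); rewrite ?subr_ge0.
Qed.

Lemma wdataset_weighted_of (X : set 'rV[R]_n) (D : {fset 'rV[R]_n})
    (T : {set D}) :
  dataset_in X D -> (forall y, X y -> 0 < q y <= 1) ->
  wdataset_in X (weighted_of q T).
Proof.
move=> XD q01 _ /imfsetP[y _ ->] /=; have Xy := XD _ (valP y).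
by have /andP[q0 q1] := q01 _ Xy; rewrite invf_ge1.
Qed.

Section AddedPoint.
Variables (D : {fset 'rV[R]_n}) (x : 'rV[R]_n).
Hypothesis xD : x \notin D.

Lemma sel_prob_embed_set (T : {set D}) :
  sel_prob q (embed_set x T) = sel_prob q T * (1 - q x).
Proof.
rewrite /sel_prob setC_embed_set // /embed_set_add.
rewrite big_setU1 ?added_notin_embed_set //=.
rewrite !big_imset /=; try by move=> ? ? _ _; apply: embed_inj.
by rewrite mulrCA mulrC.
Qed.

Lemma sel_prob_embed_set_add (T : {set D}) :
  sel_prob q (embed_set_add x T) = sel_prob q T * q x.
Proof.
rewrite /sel_prob setC_embed_set_add // /embed_set_add.
rewrite big_setU1 ?added_notin_embed_set //=.
rewrite !big_imset /=; try by move=> ? ? _ _; apply: embed_inj.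
by rewrite -[LHS]mulrA [LHS]mulrC.
Qed.

Lemma weighted_of_embed_set (T : {set D}) :
  weighted_of q (embed_set x T) = weighted_of q T.
Proof.
apply/fsetP => p; apply/imfsetP/imfsetP => /= [[y yT ->]|[z zT ->]].
  by case/imsetP: yT => z zT ->; exists z.
by exists (embed x z); rewrite ?mem_embed_set.
Qed.

Lemma weighted_of_embed_set_add (T : {set D}) :
  weighted_of q (embed_set_add x T) = weighted_of q T `|` [fset ((q x)^-1, x)].
Proof.
apply/fsetP => p; rewrite in_fsetU in_fset1.
apply/imfsetP/orP => /= [[y yT ->]|[/imfsetP [z /= zT ->]|/eqP ->]].
- case/setU1P: yT => [-> | /imsetP [z zT ->]]; first by right.
  by left; apply/imfsetP; exists z.
- by exists (embed x z); rewrite // in_setU1 mem_embed_set zT orbT.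
- by exists (added_elt D x); rewrite // setU11.
Qed.

End AddedPoint.

End PoissonSampler.

Section MixtureInequalities.
Variable R : realFieldType.
Implicit Types a b p E : R.

Lemma mixture_le a b p E :
  0 <= p -> b <= E * a -> (1 - p) * a + p * b <= (1 + p * (E - 1)) * a.
Proof. by move=> p0 bEa; nra. Qed.

Lemma le_mixture a b p E : 0 <= a -> 0 <= p <= 1 -> 1 <= E -> a <= E * b ->
  a <= (1 + p * (E - 1)) * ((1 - p) * a + p * b).
Proof.
move=> a0 /andP[p0 p1] E1 aEb.
have key : a * p * (1 - p) * (E - 1) ^+ 2 <=
    E * ((1 + p * (E - 1)) * ((1 - p) * a + p * b) - a).
  have : 0 <= (1 + p * (E - 1)) * p * (E * b - a).
    by rewrite !mulr_ge0 ?subr_ge0 //; nra.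
  by nra.
have : 0 <= E * ((1 + p * (E - 1)) * ((1 - p) * a + p * b) - a).
  by apply: le_trans key; rewrite !mulr_ge0 ?sqr_ge0 ?subr_ge0.
by rewrite pmulr_rge0 ?subr_ge0 //; lra.
Qed.

End MixtureInequalities.

Lemma expR_ge1 (R : realType) (x : R) : 0 <= x -> 1 <= expR x.
Proof. by rewrite -[1](expR0 R) ler_expR. Qed.

Section FiniteIndist.
Variables (d : measure_display) (Y : measurableType d) (R : realType).

Lemma probability_fineK (P : probability Y R) (A : set Y) :
  measurable A -> (fine (P A))%:E = P A.
Proof. by move=> mA; rewrite fineK // fin_num_measure. Qed.

Lemma indist_fine (eps : R) (P Q : probability Y R) (A : set Y) :
  indist eps P Q -> measurable A ->
  fine (P A) <= expR eps * fine (Q A) /\ fine (Q A) <= expR eps * fine (P A).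
Proof.
move=> PQ mA; have [PQA QPA] := PQ A mA.
by rewrite -!lee_fin !EFinM !probability_fineK.
Qed.

Lemma indist_refl (eps : R) (P : set Y -> \bar R) :
  0 <= eps -> (forall A, measurable A -> (0 <= P A)%E) -> indist eps P P.
Proof.
move=> eps0 P0 A mA.
have eps1 : (1 <= (expR eps)%:E)%E by rewrite lee_fin expR_ge1.
by split; apply: lee_pemull => //; apply: P0.
Qed.

End FiniteIndist.

Section ComposedLaw.
Local Open Scope fset_scope.
Variables (R : realType) (n : nat).
Variables (dY : measure_display) (Y : measurableType dY).
Variables (M : {fset (R * 'rV[R]_n)} -> probability Y R) (q : 'rV[R]_n -> R).

Lemma composed_law_ge0 (D : {fset 'rV[R]_n}) (A : set Y) :
  (forall y, y \in D -> 0 <= q y <= 1) -> (0 <= composed_law M q D A)%E.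
Proof.
move=> q01; apply: sume_ge0 => T _.
by rewrite mule_ge0 ?lee_fin ?sel_prob_ge0.
Qed.

Lemma composed_lawE (D : {fset 'rV[R]_n}) (A : set Y) : measurable A ->
  composed_law M q D A =
  (\sum_(T : {set D}) sel_prob q T * fine (M (weighted_of q T) A))%:E.
Proof.
move=> mA; rewrite -sumEFin; apply: eq_bigr => T _.
by rewrite [RHS]EFinM probability_fineK.
Qed.

Lemma composed_law_fsetU1 (D : {fset 'rV[R]_n}) (x : 'rV[R]_n) (A : set Y) :
  x \notin D -> measurable A ->
  composed_law M q (D `|` [fset x]) A =
  (\sum_(T : {set D}) sel_prob q T *
     ((1 - q x) * fine (M (weighted_of q T) A) +
      q x * fine (M (weighted_of q T `|` [fset ((q x)^-1, x)]) A)))%:E.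
Proof.
move=> xD mA; rewrite /composed_law (big_subsets_fsetU1 xD) -sumEFin.
apply: eq_bigr => T _.
rewrite sel_prob_embed_set // sel_prob_embed_set_add // weighted_of_embed_set.
rewrite weighted_of_embed_set_add -[in LHS](probability_fineK (M _) mA).
rewrite -[in LHS](probability_fineK (M (_ `|` _)) mA).
by rewrite -!EFinM /= -EFinD [in RHS]mulrDr !mulrA.
Qed.

Lemma composed_law_indist_fsetU1 (D : {fset 'rV[R]_n}) (x : 'rV[R]_n)
    (eps : R) :
  x \notin D -> (forall y, y \in D -> 0 <= q y <= 1) -> 0 <= q x <= 1 ->
  0 <= eps ->
  (forall T : {set D}, indist eps (M (weighted_of q T))
                         (M (weighted_of q T `|` [fset ((q x)^-1, x)]))) ->
  indist (ln (1 + q x * (expR eps - 1)))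
    (composed_law M q D) (composed_law M q (D `|` [fset x])).
Proof.
move=> xD qD /andP[q0 q1] eps0 M_indist A mA.
have E_ge1 := expR_ge1 eps0.
have mix_gt0 : (0 < 1 + q x * (expR eps - 1))%R.
  by apply: lt_le_trans (ltr01) _; rewrite lerDl mulr_ge0 ?subr_ge0.
rewrite lnK ?posrE // composed_lawE // composed_law_fsetU1 //.
rewrite -!EFinM !lee_fin !mulr_sumr.
split; apply: ler_sum => T _; rewrite mulrCA ler_wpM2l ?sel_prob_ge0 //;
  have [aEb bEa] := indist_fine (M_indist T) mA.
- by apply: le_mixture aEb; rewrite ?q0 ?fine_ge0 ?measure_ge0.
- exact: mixture_le bEa.
Qed.

End ComposedLaw.

Theorem theorem2 (R : realType) (n : nat) (X : set 'rV[R]_n)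
  (dY : measure_display) (Y : measurableType dY)
  (M : {fset (R * 'rV[R]_n)} -> probability Y R)
  (eps : R -> 'rV[R]_n -> R)
  (q : 'rV[R]_n -> R) :
  weighted_profile X M eps ->
  (forall x, X x -> 0 < q x <= 1) ->
  profile X (composed_law M q)
    (fun x => ln (1 + q x * (expR (eps (q x)^-1 x) - 1))).
Proof.
move=> [eps_ge0 M_indist] q01.
have w_ge1 x : X x -> 1 <= (q x)^-1.
  by move=> Xx; have /andP[q0 q1] := q01 x Xx; rewrite invf_ge1.
have q01w x : X x -> 0 <= q x <= 1.
  by move=> /q01 /andP[q0 q1]; rewrite ltW.
have psi_ge0 x : X x -> 0 <= ln (1 + q x * (expR (eps (q x)^-1 x) - 1)).
  move=> Xx; have /andP[q0 _] := q01w x Xx; apply/ln_ge0.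
  by rewrite lerDl mulr_ge0 // subr_ge0 expR_ge1 ?eps_ge0 ?w_ge1.
split => // D x XD Xx.
have [xD | xD] := boolP (x \in D).
  rewrite (fsetUidPl _ _ _) ?fsub1set //.
  apply: indist_refl (psi_ge0 x Xx) _ => A _.
  by apply: composed_law_ge0 => y /XD /q01w.
apply: composed_law_indist_fsetU1 => //; first by move=> y /XD /q01w.
- exact: q01w.
- exact: eps_ge0 (w_ge1 x Xx) Xx.
- by move=> T; apply: M_indist; [exact: wdataset_weighted_of | exact: w_ge1 |].
Qed.
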